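(* Let $b>0$, $k>0$, $c>1$ and $E\in(0,1)$. Define $$m_{SN}=\frac{-E^2k^2+2Eck-2Ek+c-1}{E^2(E^2k^2+2Ek+1)},$$ $$a_1=\frac{E^4k^2-2E^3k^2+2E^3k+3E^2ck+E^2k^2-4E^2k-2Eck+E^2+2Ec+2Ek-2E-c+1}{cE^2(E^2k^2+2Ek+1)},$$ and assume $a_1>0$, $m_{SN}>0$. Consider, with $a=a_1$ and bifurcation parameter $m>0$, the system $$\frac{dx}{dt}=bx(1-x-cy),\qquad \frac{dy}{dt}=y\Big(\frac{1}{1+kx}-y-ax-mxy\Big),$$ for which, at $m=m_{SN}$, $E_{3*}=(E,(1-E)/c)$ is a positive equilibrium. Suppose that at $m=m_{SN}$ one has $m>m_1:=1-ac-k$ and $0<k<\frac1a-1$, and that $c\ne\frac{E^3k^3+3E^2k^2+3Ek+1}{3E^2k^2+3Ek+1}$. Then the system undergoes a saddle-node bifurcation around $E_{3*}$ at the bifurcation parameter threshold $m=m_{SN}$.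
   Context: The values $m_{SN}$ and $a_1$ are exactly those for which $E$ is a double root of the cubic $u(x)=kmx^3+((-ac-m+1)k+m)x^2+(-ac-k-m+1)x+c-1$, i.e. $u(E)=u'(E)=0$; roots of $u$ in $(0,1)$ are the $x$-coordinates of positive equilibria $(x,(1-x)/c)$. *)

From HB Require Import structures.
From mathcomp Require Import all_boot all_order all_algebra.
From mathcomp Require Import all_classical all_reals all_analysis.
Set Implicit Arguments. Unset Strict Implicit. Unset Printing Implicit Defensive.
Import Order.TTheory GRing.Theory Num.Theory.
Local Open Scope ring_scope.

Section Defs.
Variable R : realType.

(* Planar vector field depending on a scalar parameter m: F m x y = (dx/dt, dy/dt). *)
Definition pfield := R -> R -> R -> R * R.

Definition lv_field (b c k a : R) : pfield :=
  fun m x y => (b * x * (1 - x - c * y),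
                y * ((1 + k * x)^-1 - y - a * x - m * x * y)).

Definition is_equil (F : pfield) (m : R) (p : R * R) : Prop :=
  F m p.1 p.2 = (0, 0).

Definition jac11 (F : pfield) m (p : R * R) := derive1 (fun t => (F m t p.2).1) p.1.
Definition jac12 (F : pfield) m (p : R * R) := derive1 (fun t => (F m p.1 t).1) p.2.
Definition jac21 (F : pfield) m (p : R * R) := derive1 (fun t => (F m t p.2).2) p.1.
Definition jac22 (F : pfield) m (p : R * R) := derive1 (fun t => (F m p.1 t).2) p.2.
Definition jdet (F : pfield) m p := jac11 F m p * jac22 F m p - jac12 F m p * jac21 F m p.
Definition jtr (F : pfield) m p := jac11 F m p + jac22 F m p.

Definition in_ball (p0 : R * R) (r : R) (p : R * R) : Prop :=
  (p.1 - p0.1) ^+ 2 + (p.2 - p0.2) ^+ 2 < r ^+ 2.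

(* Saddle-node bifurcation of equilibria of F at p0 when m crosses m0:
   - p0 is an equilibrium at m0 with a simple zero eigenvalue
     (det J = 0, trace J <> 0);
   - locally (in a ball around p0, for m near m0) p0 is the only equilibrium
     at m = m0; on one side of m0 there is no equilibrium, on the other side
     there are exactly two, one a saddle (det J < 0) and one a node
     (det J > 0 with real distinct eigenvalues, tr^2 - 4 det > 0). *)
Definition saddle_node_bif (F : pfield) (m0 : R) (p0 : R * R) : Prop :=
  [/\ is_equil F m0 p0, jdet F m0 p0 = 0, jtr F m0 p0 != 0 &
   exists r eps : R, [/\ 0 < r, 0 < eps,
     (forall p, in_ball p0 r p -> is_equil F m0 p -> p = p0) &
     exists s : R, [/\ s = 1 \/ s = -1,
       (forall m, 0 < s * (m - m0) < eps ->
          forall p, in_ball p0 r p -> ~ is_equil F m p) &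
       (forall m, 0 < s * (m0 - m) < eps ->
          exists p q : R * R, [/\ p <> q,
            in_ball p0 r p /\ is_equil F m p,
            in_ball p0 r q /\ is_equil F m q,
            (forall z, in_ball p0 r z -> is_equil F m z -> z = p \/ z = q) &
            [/\ jdet F m p < 0, 0 < jdet F m q &
                0 < jtr F m q ^+ 2 - 4 * jdet F m q]])]]].

Definition m_SN (k c E : R) : R :=
  (- E^+2 * k^+2 + 2 * E * c * k - 2 * E * k + c - 1)
  / (E^+2 * (E^+2 * k^+2 + 2 * E * k + 1)).

Definition a_1 (k c E : R) : R :=
  (E^+4 * k^+2 - 2 * E^+3 * k^+2 + 2 * E^+3 * k + 3 * E^+2 * c * k
   + E^+2 * k^+2 - 4 * E^+2 * k - 2 * E * c * k + E^+2 + 2 * E * c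
   + 2 * E * k - 2 * E - c + 1)
  / (c * E^+2 * (E^+2 * k^+2 + 2 * E * k + 1)).

End Defs.

(* Positive equilibria lie on the line x + c y = 1, and their abscissae are
   the roots in (0, 1) of the cubic u(m, x) of [lv_cubic]; there the Jacobian
   determinant is a positive multiple of u'(x).  For a = a_1 and m0 = m_SN the
   point E is a double root, so
     u(m, x) = (x - E)^2 (k m0 x + q) + (m - m0) x (k x + 1) (x - 1)
   with q = (c - 1) / E^2 > 0.  For m < m0 the cubic is positive on (0, 1):
   no equilibrium.  For m slightly above m0, u(m, E) < 0 < u(m, E +- r/2)
   yields two roots, and convexity of u near E (a positive second divided
   difference) excludes a third one and makes u' negative at the left root
   (a saddle) and positive at the right root (a node).  The discriminant
   tr^2 - 4 det is positive because both off-diagonal Jacobian entries are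
   negative. *)

From HB Require Import structures.
From mathcomp Require Import all_boot all_order all_algebra.
From mathcomp Require Import all_classical all_reals all_analysis.
From mathcomp Require Import polyrcf ring lra.
Set Implicit Arguments.
Unset Strict Implicit.
Unset Printing Implicit Defensive.
Import Order.TTheory GRing.Theory Num.Theory.
Local Open Scope ring_scope.

Section CubicAlgebra.
Variable R : idomainType.
Variables c3 c2 c1 c0 : R.

Definition cubic x := c3 * x ^+ 3 + c2 * x ^+ 2 + c1 * x + c0.
Definition cubic_deriv x := 3 * c3 * x ^+ 2 + 2 * c2 * x + c1.
Definition cubic_dd x y := c1 + c2 * (x + y) + c3 * (x ^+ 2 + x * y + y ^+ 2).
Definition cubic_dd2 x y z := c2 + c3 * (x + y + z).

Lemma cubic_subE x y : cubic y - cubic x = (y - x) * cubic_dd x y.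
Proof. rewrite /cubic /cubic_dd; ring. Qed.

Lemma cubic_dd_subE x y z :
  cubic_dd y z - cubic_dd x y = (z - x) * cubic_dd2 x y z.
Proof. rewrite /cubic_dd /cubic_dd2; ring. Qed.

Lemma cubic_derivE x : cubic_deriv x = cubic_dd x x.
Proof. rewrite /cubic_deriv /cubic_dd; ring. Qed.

Lemma cubic_double_rootE e x : cubic e = 0 -> cubic_deriv e = 0 ->
  cubic x = (x - e) ^+ 2 * (c3 * x + c2 + 2 * c3 * e).
Proof.
move=> root_e root'_e.
have -> : cubic x = cubic x - cubic e - cubic_deriv e * (x - e).
  by rewrite root_e root'_e; ring.
rewrite /cubic /cubic_deriv; ring.
Qed.

Lemma cubic_dd2_roots x y z : x != y -> y != z -> x != z ->
  cubic x = 0 -> cubic y = 0 -> cubic z = 0 -> cubic_dd2 x y z = 0.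
Proof.
move=> nxy nyz nxz rx ry rz.
have dd0 u v : u != v -> cubic u = 0 -> cubic v = 0 -> cubic_dd u v = 0.
  move=> nuv ru rv; apply/eqP; have := cubic_subE u v.
  rewrite ru rv subrr => /esym/eqP; rewrite mulf_eq0 subr_eq0 eq_sym.
  by rewrite (negbTE nuv).
have := cubic_dd_subE x y z; rewrite dd0 // dd0 // subrr => /esym/eqP.
by rewrite mulf_eq0 subr_eq0 eq_sym (negbTE nxz) => /eqP.
Qed.

End CubicAlgebra.

Section CubicSign.
Variable R : realFieldType.
Variables c3 c2 c1 c0 : R.
Local Notation p := (cubic c3 c2 c1 c0).
Local Notation dd := (cubic_dd c3 c2 c1).
Local Notation dd2 := (cubic_dd2 c3 c2).

(* [0 < dd2 x y z] says that [p] is convex between the points involved. *)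
Lemma cubic_deriv_lt0 x e : x < e -> p x = 0 -> p e < 0 -> 0 < dd2 x x e ->
  cubic_deriv c3 c2 c1 x < 0.
Proof.
move=> xe rx pe dd2_gt0; rewrite cubic_derivE.
have ex : 0 < e - x by rewrite subr_gt0.
have dd_lt0 : dd x e < 0.
  by rewrite -(pmulr_rlt0 _ ex) -(cubic_subE _ _ _ c0) rx subr0.
have := cubic_dd_subE c3 c2 c1 x x e.
have : 0 < (e - x) * dd2 x x e by rewrite mulr_gt0.
lra.
Qed.

Lemma cubic_deriv_gt0 x e : e < x -> p x = 0 -> p e < 0 -> 0 < dd2 e x x ->
  0 < cubic_deriv c3 c2 c1 x.
Proof.
move=> ex rx pe dd2_gt0; rewrite cubic_derivE.
have xe : 0 < x - e by rewrite subr_gt0.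
have dd_gt0 : 0 < dd e x.
  by rewrite -(pmulr_rgt0 _ xe) -(cubic_subE _ _ _ c0) rx sub0r oppr_gt0.
have := cubic_dd_subE c3 c2 c1 e x x.
have : 0 < (x - e) * dd2 e x x by rewrite mulr_gt0.
lra.
Qed.

End CubicSign.

Lemma cubic_ivt (R : rcfType) (c3 c2 c1 c0 a b : R) : a <= b ->
  cubic c3 c2 c1 c0 a * cubic c3 c2 c1 c0 b <= 0 ->
  exists2 x, a <= x <= b & cubic c3 c2 c1 c0 x = 0.
Proof.
pose P : {poly R} := c3%:P * 'X^3 + c2%:P * 'X^2 + c1%:P * 'X + c0%:P.
have PE x : P.[x] = cubic c3 c2 c1 c0 x by rewrite /P /cubic !hornerE.
move=> ab; rewrite -!PE => /(polyrcf.poly_ivt ab)[x].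
by rewrite in_itv /= /root PE => ? /eqP; exists x.
Qed.

Section LotkaVolterra.
Variable R : realType.
Variables b c k a : R.
Local Notation F := (lv_field b c k a).

Lemma jac11E m p : jac11 F m p = b * (1 - 2 * p.1 - c * p.2).
Proof.
rewrite /jac11 derive1E; apply: derive_val.
by apply: is_derive_eq; rewrite /GRing.scale /=; ring.
Qed.

Lemma jac12E m p : jac12 F m p = - (b * c * p.1).
Proof.
rewrite /jac12 derive1E; apply: derive_val.
by apply: is_derive_eq; rewrite /GRing.scale /=; ring.
Qed.

Lemma jac21E m p : 1 + k * p.1 != 0 ->
  jac21 F m p = p.2 * (- (k * ((1 + k * p.1)^-1) ^+ 2) - a - m * p.2).
Proof.
move=> kx0; rewrite /jac21 derive1E; apply: derive_val.
by apply: is_derive_eq; rewrite /GRing.scale /=; field.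
Qed.

Lemma jac22E m p :
  jac22 F m p = (1 + k * p.1)^-1 - 2 * p.2 - a * p.1 - 2 * m * p.1 * p.2.
Proof.
rewrite /jac22 derive1E; apply: derive_val.
by apply: is_derive_eq; rewrite /GRing.scale /=; ring.
Qed.

Definition lv_cubic m :=
  cubic (k * m) ((- a * c - m + 1) * k + m) (- a * c - k - m + 1) (c - 1).
Definition lv_cubic_deriv m :=
  cubic_deriv (k * m) ((- a * c - m + 1) * k + m) (- a * c - k - m + 1).

Lemma lv_cubic_shift m m' x :
  lv_cubic m x = lv_cubic m' x + (m - m') * (x * (k * x + 1) * (x - 1)).
Proof. rewrite /lv_cubic /cubic; ring. Qed.

Hypotheses (b_gt0 : 0 < b) (k_gt0 : 0 < k) (c_gt1 : 1 < c) (a_gt0 : 0 < a).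

Let c_gt0 : 0 < c. Proof. exact: lt_trans ltr01 c_gt1. Qed.
Let c_neq0 : c != 0. Proof. exact: lt0r_neq0. Qed.

Let kx1_gt0 (x : R) : 0 < x -> 0 < 1 + k * x.
Proof. by move=> x_gt0; rewrite addr_gt0 ?mulr_gt0. Qed.

Lemma lv_cubic_line m x : 0 < x -> lv_cubic m x =
  c * (1 + k * x) *
  ((1 + k * x)^-1 - (1 - x) / c - a * x - m * x * ((1 - x) / c)).
Proof.
move=> /kx1_gt0/lt0r_neq0 kx0.
by rewrite /lv_cubic /cubic; field; rewrite kx0 c_neq0.
Qed.

Lemma lv_cubic_root_inv m x : 0 < x -> lv_cubic m x = 0 ->
  (1 + k * x)^-1 = (1 - x) / c + a * x + m * x * ((1 - x) / c).
Proof.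
move=> x_gt0 u0; have kx0 := lt0r_neq0 (kx1_gt0 x_gt0).
move: (lv_cubic_line m x_gt0); rewrite u0 => /esym/eqP.
rewrite !mulf_eq0 (negbTE c_neq0) (negbTE kx0) /= subr_eq0.
by move/eqP => e; rewrite -e; ring.
Qed.

Lemma is_equil_line m x : 0 < x -> lv_cubic m x = 0 ->
  is_equil F m (x, (1 - x) / c).
Proof.
move=> x_gt0 u0; rewrite /is_equil /lv_field /=.
by rewrite (lv_cubic_root_inv x_gt0 u0); congr (_, _); field.
Qed.

Lemma pos_equil_on_line m x y : 0 < x -> 0 < y -> is_equil F m (x, y) ->
  y = (1 - x) / c /\ lv_cubic m x = 0.
Proof.
move=> x_gt0 y_gt0 [/eqP e1 /eqP e2].
move: e1 e2; rewrite !mulf_eq0 (gt_eqF b_gt0) (gt_eqF x_gt0) (gt_eqF y_gt0) /=.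
move=> /eqP e1 /eqP e2.
have ey : y = (1 - x) / c.
  by apply: (mulfI c_neq0); rewrite mulrCA divff // mulr1; lra.
by split => //; rewrite (lv_cubic_line m x_gt0) -ey e2 mulr0.
Qed.

Lemma jdet_line m x : 0 < x -> lv_cubic m x = 0 ->
  jdet F m (x, (1 - x) / c) * (1 + k * x) =
  b * x * ((1 - x) / c) * lv_cubic_deriv m x.
Proof.
move=> x_gt0 u0; have kx0 := lt0r_neq0 (kx1_gt0 x_gt0).
rewrite /jdet jac11E jac12E jac22E jac21E //=.
have winv := lv_cubic_root_inv x_gt0 u0.
have w1 : (1 + k * x)^-1 * (1 + k * x) = 1 by rewrite mulVf.
set w := (1 + k * x)^-1 in winv w1 *.
have w2 : w ^+ 2 * (1 + k * x) = w by rewrite expr2 -mulrA w1 mulr1.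
set y := (1 - x) / c in winv *.
transitivity
  (b * (1 - 2 * x - c * y) * (w - 2 * y - a * x - 2 * m * x * y) * (1 + k * x)
   + b * c * x * y *
     (- k * (w ^+ 2 * (1 + k * x)) - (a + m * y) * (1 + k * x))).
  by ring.
by rewrite w2 winv /y /lv_cubic_deriv /cubic_deriv; field.
Qed.

Lemma jtr_line m x : 0 < x -> lv_cubic m x = 0 ->
  jtr F m (x, (1 - x) / c) = - (b * x) - (1 - x) / c - m * x * ((1 - x) / c).
Proof.
move=> x_gt0 u0.
by rewrite /jtr jac11E jac22E /= (lv_cubic_root_inv x_gt0 u0); field.
Qed.

Lemma jdisc_gt0 (m x y : R) : 0 < m -> 0 < x -> 0 < y ->
  0 < jtr F m (x, y) ^+ 2 - 4 * jdet F m (x, y).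
Proof.
move=> m_gt0 x_gt0 y_gt0; have kx0 := lt0r_neq0 (kx1_gt0 x_gt0).
have -> : jtr F m (x, y) ^+ 2 - 4 * jdet F m (x, y) =
    (jac11 F m (x, y) - jac22 F m (x, y)) ^+ 2
    + 4 * (jac12 F m (x, y) * jac21 F m (x, y)).
  by rewrite /jtr /jdet; ring.
rewrite jac12E jac21E //=; move: (1 + k * x)^-1 => w.
have -> : - (b * c * x) * (y * (- (k * w ^+ 2) - a - m * y)) =
    b * c * x * y * (k * w ^+ 2 + a + m * y) by ring.
have kw_ge0 : 0 <= k * w ^+ 2 by rewrite mulr_ge0 ?sqr_ge0 ?ltW.
have s_gt0 : 0 < k * w ^+ 2 + a + m * y.
  by rewrite addr_gt0 ?mulr_gt0 // ltr_wpDl.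
by apply: ltr_wpDl; rewrite ?sqr_ge0 // !mulr_gt0.
Qed.

Lemma line_factor_bounds (x : R) : 0 < x < 1 ->
  0 < x * (k * x + 1) * (1 - x) < 1 + k.
Proof.
move=> /andP[x_gt0 x_lt1].
have kx_gt0 : 0 < k * x by rewrite mulr_gt0.
have kx_lt : k * x < k by rewrite gtr_pMr.
have x1_gt0 : 0 < x * (1 - x) by rewrite mulr_gt0 // subr_gt0.
have x1_lt1 : x * (1 - x) < 1 by nra.
have -> : x * (k * x + 1) * (1 - x) = x * (1 - x) * (k * x + 1) by ring.
apply/andP; split; nra.
Qed.

Variables E m0 : R.
Hypotheses (E_gt0 : 0 < E) (E_lt1 : E < 1) (m0_gt0 : 0 < m0).
Hypotheses (root_E : lv_cubic m0 E = 0) (root'_E : lv_cubic_deriv m0 E = 0).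

Local Notation y0 := ((1 - E) / c).
Local Notation p0 := (E, y0).

(* By the constant term of the cubic, [q = (c - 1) / E ^ 2]. *)
Let q : R := (- a * c - m0 + 1) * k + m0 + 2 * (k * m0) * E.

Lemma lv_cubic_double_root (m x : R) : lv_cubic m x =
  (x - E) ^+ 2 * (k * m0 * x + q) + (m - m0) * (x * (k * x + 1) * (x - 1)).
Proof.
rewrite (lv_cubic_shift m m0) {1}/lv_cubic.
rewrite (cubic_double_rootE _ root_E root'_E).
by rewrite /q; ring.
Qed.

Let q_gt0 : 0 < q.
Proof.
have := lv_cubic_double_root m0 0; rewrite /lv_cubic /cubic.
rewrite !(expr0n, mulr0, mul0r, add0r, addr0, subrr, sub0r, sqrrN) => e.
by rewrite -(pmulr_rgt0 _ (exprn_gt0 2 E_gt0)) -e subr_gt0.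
Qed.

Let r : R := Num.min (E / 3) (Num.min ((1 - E) / 2) (y0 / 2)).

Let r_bounds : [/\ 0 < r, r <= E / 3, r <= (1 - E) / 2 & r <= y0 / 2].
Proof.
have y0_gt0 : 0 < y0 by rewrite divr_gt0 // subr_gt0.
by split; rewrite /r ?lt_min ?ge_min ?lexx ?orbT // ?divr_gt0 // subr_gt0.
Qed.

Let eps : R := q * r ^+ 2 / (4 * (1 + k)).

Let eps_bounds : 0 < eps /\ eps * (1 + k) = q * r ^+ 2 / 4.
Proof.
have [r_gt0 _ _ _] := r_bounds.
have k1_gt0 : 0 < 1 + k by rewrite addr_gt0.
split; first by rewrite divr_gt0 ?mulr_gt0 ?exprn_gt0.
by rewrite /eps; field; rewrite lt0r_neq0.
Qed.

Lemma in_ball_bounds (x y : R) :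
  in_ball p0 r (x, y) -> E - r < x < E + r /\ 0 < y.
Proof.
have [r_gt0 _ _ r_y0] := r_bounds.
rewrite /in_ball /= => xy_r.
have := sqr_ge0 (x - E); have := sqr_ge0 (y - y0).
by split; [apply/andP; split|]; nra.
Qed.

Lemma line_in_ball (x : R) :
  (x - E) ^+ 2 * 4 <= r ^+ 2 -> in_ball p0 r (x, (1 - x) / c).
Proof.
have [r_gt0 _ _ _] := r_bounds.
rewrite /in_ball /= => x_r.
have e : ((1 - x) / c - y0) ^+ 2 * c ^+ 2 = (x - E) ^+ 2 by field.
have : ((1 - x) / c - y0) ^+ 2 <= ((1 - x) / c - y0) ^+ 2 * c ^+ 2.
  by rewrite ler_peMr ?sqr_ge0 // exprn_ege1 // ltW.
have := exprn_gt0 2 r_gt0.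
lra.
Qed.

Lemma lv_cubic_gt0_below (m x : R) : m < m0 -> 0 < x < 1 -> 0 < lv_cubic m x.
Proof.
move=> m_lt x01; have /andP[D_gt0 _] := line_factor_bounds x01.
have /andP[x_gt0 _] := x01.
have : 0 <= (x - E) ^+ 2 * (k * m0 * x + q).
  by rewrite mulr_ge0 ?sqr_ge0 // addr_ge0 ?ltW // !mulr_gt0.
have : 0 < (m0 - m) * (x * (k * x + 1) * (1 - x)) by rewrite mulr_gt0 ?subr_gt0.
rewrite lv_cubic_double_root; lra.
Qed.

Lemma lv_cubic_E_lt0 (m : R) : m0 < m -> lv_cubic m E < 0.
Proof.
move=> m_gt; have E01 : 0 < E < 1 by rewrite E_gt0.
have /andP[D_gt0 _] := line_factor_bounds E01.
have : 0 < (m - m0) * (E * (k * E + 1) * (1 - E)) by rewrite mulr_gt0 ?subr_gt0.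
rewrite lv_cubic_double_root subrr expr0n /= mul0r add0r; lra.
Qed.

Lemma lv_cubic_gt0_off_E (m x : R) : m0 <= m < m0 + eps ->
  E - r <= x <= E + r -> r ^+ 2 <= (x - E) ^+ 2 * 4 -> 0 < lv_cubic m x.
Proof.
move=> /andP[m_ge m_lt] /andP[x_ge x_le] x_far.
have [r_gt0 r_E r_1E _] := r_bounds; have [eps_gt0 eps_mul] := eps_bounds.
have x01 : 0 < x < 1 by apply/andP; split; lra.
have /andP[x_gt0 _] := x01; have /andP[_ D_lt] := line_factor_bounds x01.
have := mulr_ge0 (sqr_ge0 (x - E))
  (ltW (mulr_gt0 (mulr_gt0 k_gt0 m0_gt0) x_gt0)).
have : (m - m0) * (x * (k * x + 1) * (1 - x)) <= (m - m0) * (1 + k).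
  by rewrite ler_wpM2l ?subr_ge0 // ltW.
have : (m - m0) * (1 + k) < eps * (1 + k).
  by rewrite ltr_pM2r ?addr_gt0 ?ltrBlDl.
have : r ^+ 2 * q <= (x - E) ^+ 2 * 4 * q by rewrite ler_pM2r.
rewrite lv_cubic_double_root; lra.
Qed.

Local Notation lv_dd2 m := (cubic_dd2 (k * m) ((- a * c - m + 1) * k + m)).

(* [r <= E / 3] keeps [x1 + x2 + x3 >= 2 E], which makes the cubic convex
   near [E] at [m = m0]; the shift of [m] is absorbed by [eps]. *)
Lemma lv_dd2_gt0 (m x1 x2 x3 : R) : m0 <= m < m0 + eps ->
  E - r <= x1 <= E + r -> E - r <= x2 <= E + r -> E - r <= x3 <= E + r ->
  0 < lv_dd2 m x1 x2 x3.
Proof.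
move=> /andP[m_ge m_lt] /andP[x1_ge _] /andP[x2_ge _] /andP[x3_ge _].
have [r_gt0 r_E r_1E _] := r_bounds; have [eps_gt0 eps_mul] := eps_bounds.
have -> : lv_dd2 m x1 x2 x3 = q + k * m0 * (x1 + x2 + x3 - 2 * E)
    + (m - m0) * (1 + k * (x1 + x2 + x3)) - (m - m0) * k.
  by rewrite /cubic_dd2 /q; ring.
have : 0 <= k * m0 * (x1 + x2 + x3 - 2 * E).
  by apply: mulr_ge0; [rewrite ltW // mulr_gt0 | lra].
have : 0 <= (m - m0) * (1 + k * (x1 + x2 + x3)).
  apply: mulr_ge0; first by rewrite subr_ge0.
  by apply: addr_ge0 => //; apply: mulr_ge0; [exact: ltW | lra].
have : (m - m0) * k <= (m - m0) * (1 + k) by rewrite ler_wpM2l ?subr_ge0 ?lerDr.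
have : (m - m0) * (1 + k) < eps * (1 + k).
  by rewrite ltr_pM2r ?addr_gt0 ?ltrBlDl.
have : q * r ^+ 2 < q * 4.
  by rewrite ltr_pM2l // (lt_trans (_ : _ < 1)) ?exprn_ilt1 ?ltW //; lra.
lra.
Qed.

Lemma lv_cubic_two_roots (m : R) : m0 < m < m0 + eps ->
  exists x1 x2 : R, [/\ E - r / 2 <= x1 < E, E < x2 <= E + r / 2,
                    lv_cubic m x1 = 0 & lv_cubic m x2 = 0].
Proof.
move=> /andP[m_gt m_lt]; have [r_gt0 _ _ _] := r_bounds.
have uE := lv_cubic_E_lt0 m_gt.
have m_range : m0 <= m < m0 + eps by rewrite ltW.
have u_left : 0 < lv_cubic m (E - r / 2).
  apply: lv_cubic_gt0_off_E => //; first by apply/andP; split; lra.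
  by have -> : (E - r / 2 - E) ^+ 2 * 4 = r ^+ 2 by field.
have u_right : 0 < lv_cubic m (E + r / 2).
  apply: lv_cubic_gt0_off_E => //; first by apply/andP; split; lra.
  by have -> : (E + r / 2 - E) ^+ 2 * 4 = r ^+ 2 by field.
have [x1 /andP[x1_ge x1_le] u1] :
    exists2 x, E - r / 2 <= x <= E & lv_cubic m x = 0.
  by apply: cubic_ivt; [lra | rewrite pmulr_rle0 // ltW].
have [x2 /andP[x2_ge x2_le] u2] :
    exists2 x, E <= x <= E + r / 2 & lv_cubic m x = 0.
  by apply: cubic_ivt; [lra | rewrite nmulr_rle0 // ltW].
exists x1, x2; split => //.
all: rewrite ?x1_ge ?x2_le lt_neqAle ?x1_le ?x2_ge ?andbT.
  by apply: contraTneq uE => <-; rewrite u1 ltxx.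
by apply: contraTneq uE => ->; rewrite u2 ltxx.
Qed.

Lemma jdet_lt0_left_root (m x : R) : m0 < m < m0 + eps -> E - r <= x < E ->
  lv_cubic m x = 0 -> jdet F m (x, (1 - x) / c) < 0.
Proof.
move=> /andP[m_gt m_lt] /andP[x_ge x_lt] u_x.
have [r_gt0 r_E r_1E _] := r_bounds.
have x01 : 0 < x < 1 by apply/andP; split; lra.
have xr : E - r <= x <= E + r by apply/andP; split; lra.
have Er : E - r <= E <= E + r by apply/andP; split; lra.
have u'_lt0 : lv_cubic_deriv m x < 0.
  apply: cubic_deriv_lt0 x_lt u_x (lv_cubic_E_lt0 m_gt) _.
  by apply: lv_dd2_gt0; rewrite // (ltW m_gt) m_lt.
have /andP[x_gt0 x_lt1] := x01.
have P_gt0 : 0 < b * x * ((1 - x) / c) by rewrite !mulr_gt0 ?invr_gt0 ?subr_gt0.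
move: u'_lt0; rewrite -(pmulr_rlt0 _ P_gt0) -jdet_line //.
by rewrite pmulr_llt0 ?kx1_gt0.
Qed.

Lemma jdet_gt0_right_root (m x : R) : m0 < m < m0 + eps -> E < x <= E + r ->
  lv_cubic m x = 0 -> 0 < jdet F m (x, (1 - x) / c).
Proof.
move=> /andP[m_gt m_lt] /andP[x_gt x_le] u_x.
have [r_gt0 r_E r_1E _] := r_bounds.
have x01 : 0 < x < 1 by apply/andP; split; lra.
have xr : E - r <= x <= E + r by apply/andP; split; lra.
have Er : E - r <= E <= E + r by apply/andP; split; lra.
have u'_gt0 : 0 < lv_cubic_deriv m x.
  apply: cubic_deriv_gt0 x_gt u_x (lv_cubic_E_lt0 m_gt) _.
  by apply: lv_dd2_gt0; rewrite // (ltW m_gt) m_lt.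
have /andP[x_gt0 x_lt1] := x01.
have P_gt0 : 0 < b * x * ((1 - x) / c) by rewrite !mulr_gt0 ?invr_gt0 ?subr_gt0.
move: u'_gt0; rewrite -(pmulr_rgt0 _ P_gt0) -jdet_line //.
by rewrite pmulr_lgt0 ?kx1_gt0.
Qed.

Lemma lv_equil_unique_at_m0 (p : R * R) :
  in_ball p0 r p -> is_equil F m0 p -> p = p0.
Proof.
case: p => x y /in_ball_bounds[/andP[x_ge _] y_gt0].
have [r_gt0 r_E _ _] := r_bounds; have x_gt0 : 0 < x by lra.
move=> /pos_equil_on_line-/(_ x_gt0 y_gt0)[-> u_x].
have fac_gt0 : 0 < k * m0 * x + q by rewrite addr_gt0 // !mulr_gt0.
suff -> : x = E by [].
apply/eqP; move: u_x; rewrite lv_cubic_double_root subrr mul0r addr0 => /eqP.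
by rewrite mulf_eq0 sqrf_eq0 subr_eq0 (negbTE (lt0r_neq0 fac_gt0)) orbF.
Qed.

Lemma lv_no_equil_below (m : R) : m < m0 ->
  forall p, in_ball p0 r p -> ~ is_equil F m p.
Proof.
move=> m_lt [x y] /in_ball_bounds[/andP[x_ge x_le] y_gt0].
have [r_gt0 r_E r_1E _] := r_bounds.
have x01 : 0 < x < 1 by apply/andP; split; lra.
have /andP[x_gt0 _] := x01.
move=> /pos_equil_on_line-/(_ x_gt0 y_gt0)[_ u_x].
by move: (lv_cubic_gt0_below m_lt x01); rewrite u_x ltxx.
Qed.

Lemma lv_two_equil_above (m : R) : m0 < m < m0 + eps ->
  exists p1 p2 : R * R, [/\ p1 <> p2,
    in_ball p0 r p1 /\ is_equil F m p1,
    in_ball p0 r p2 /\ is_equil F m p2,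
    (forall z, in_ball p0 r z -> is_equil F m z -> z = p1 \/ z = p2) &
    [/\ jdet F m p1 < 0, 0 < jdet F m p2 &
        0 < jtr F m p2 ^+ 2 - 4 * jdet F m p2]].
Proof.
move=> m_range; have /andP[m_gt m_lt] := m_range.
have [x1 [x2 [/andP[x1_ge x1_lt] /andP[x2_gt x2_le] u1 u2]]] :=
  lv_cubic_two_roots m_range.
have [r_gt0 r_E r_1E _] := r_bounds.
have x1_gt0 : 0 < x1 by lra.
have x2_gt0 : 0 < x2 by lra.
have x12 : x1 < x2 by lra.
exists (x1, (1 - x1) / c), (x2, (1 - x2) / c); split.
- by case=> x12_eq _; lra.
- split; last exact: is_equil_line x1_gt0 u1.
  apply: line_in_ball.
  have : 0 <= (x1 - E + r / 2) * (r / 2 + (E - x1)) by apply: mulr_ge0; lra.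
  lra.
- split; last exact: is_equil_line x2_gt0 u2.
  apply: line_in_ball.
  have : 0 <= (E + r / 2 - x2) * (r / 2 + (x2 - E)) by apply: mulr_ge0; lra.
  lra.
- case=> x y /[dup] /in_ball_bounds[/andP[x_ge x_le] y_gt0] _.
  have x_gt0 : 0 < x by lra.
  move=> /pos_equil_on_line-/(_ x_gt0 y_gt0)[-> u_x].
  have [->|x1x] := eqVneq x1 x; first by left.
  have [->|x2x] := eqVneq x2 x; first by right.
  have : 0 < lv_dd2 m x1 x2 x by apply: lv_dd2_gt0; rewrite ?ltW //; lra.
  by rewrite (cubic_dd2_roots (negbT (lt_eqF x12)) x2x x1x u1 u2 u_x) ltxx.
- split.
  + by apply: jdet_lt0_left_root; rewrite ?m_gt ?x1_lt //; lra.
  + by apply: jdet_gt0_right_root; rewrite ?m_gt ?x2_gt //; lra.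
  + apply: jdisc_gt0 => //; first exact: lt_trans m0_gt0 m_gt.
    by rewrite divr_gt0 // subr_gt0; lra.
Qed.

Theorem lv_saddle_node : saddle_node_bif F m0 p0.
Proof.
have [r_gt0 _ _ _] := r_bounds; have [eps_gt0 _] := eps_bounds.
have y0_gt0 : 0 < y0 by rewrite divr_gt0 // subr_gt0.
split.
- exact: is_equil_line.
- have := jdet_line E_gt0 root_E; rewrite root'_E mulr0 => /eqP.
  by rewrite mulf_eq0 (negbTE (lt0r_neq0 (kx1_gt0 E_gt0))) orbF => /eqP.
- rewrite jtr_line // lt_eqF //.
  have := mulr_gt0 b_gt0 E_gt0.
  have := mulr_gt0 (mulr_gt0 m0_gt0 E_gt0) y0_gt0.
  lra.
exists r, eps; split => //; first exact: lv_equil_unique_at_m0.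
exists (-1); split; first by right.
- move=> m; rewrite mulN1r opprB => /andP[m_lt _].
  by apply: lv_no_equil_below; rewrite -subr_gt0.
- move=> m; rewrite mulN1r opprB => /andP[m_gt m_lt].
  by apply: lv_two_equil_above; rewrite -subr_gt0 m_gt -ltrBlDl.
Qed.

End LotkaVolterra.

Lemma lv_cubic_m_SN (R : realType) (k c E : R) :
  c != 0 -> E != 0 -> E * k + 1 != 0 ->
  lv_cubic c k (a_1 k c E) (m_SN k c E) E = 0 /\
  lv_cubic_deriv c k (a_1 k c E) (m_SN k c E) E = 0.
Proof.
move=> c_neq0 E_neq0 Ek_neq0.
rewrite /lv_cubic /lv_cubic_deriv /cubic /cubic_deriv /a_1 /m_SN.
have -> : E ^+ 2 * k ^+ 2 + 2 * E * k + 1 = (E * k + 1) ^+ 2 by ring.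
by split; field; rewrite c_neq0 E_neq0 Ek_neq0.
Qed.

Theorem theorem10 (R : realType) (b k c E : R) :
  0 < b -> 0 < k -> 1 < c -> 0 < E < 1 ->
  0 < a_1 k c E -> 0 < m_SN k c E ->
  1 - a_1 k c E * c - k < m_SN k c E ->
  k < (a_1 k c E)^-1 - 1 ->
  c != (E^+3 * k^+3 + 3 * E^+2 * k^+2 + 3 * E * k + 1)
       / (3 * E^+2 * k^+2 + 3 * E * k + 1) ->
  saddle_node_bif (lv_field b c k (a_1 k c E)) (m_SN k c E) (E, (1 - E) / c).
Proof.
(* The bounds [m1 < m_SN], [k < 1/a - 1] and the excluded value of [c] are
   not needed for the local bifurcation. *)
move=> b_gt0 k_gt0 c_gt1 /andP[E_gt0 E_lt1] a_gt0 m_gt0 _ _ _.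
have c_neq0 : c != 0 by rewrite lt0r_neq0 // (lt_trans ltr01).
have Ek_neq0 : E * k + 1 != 0 by rewrite lt0r_neq0 // addr_gt0 ?mulr_gt0.
have [root root'] := lv_cubic_m_SN c_neq0 (lt0r_neq0 E_gt0) Ek_neq0.
exact: (lv_saddle_node b_gt0 k_gt0 c_gt1 a_gt0 E_gt0 E_lt1 m_gt0 root root').
Qed.
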